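(* Let $\beta:\mathbb{Z}\to\mathbb{C}$ have convergent increments and let $D_\beta:\mathcal{D}\to\mathcal{H}$ be $$D_\beta f=U\beta(\mathbb{K})f-f\beta(-\mathbb{K})U=\sum_{n\in\mathbb{Z}}U^{n+1}\big(\beta(\mathbb{K}+n)f_n(\mathbb{K})-\beta(-\mathbb{K}-1)f_n(\mathbb{K}+1)\big).$$ Let $m^2$ be a positive number. Then for all $f\in\mathcal{H}^+$, $$\langle \Theta f,\big(D_\beta^*D_\beta+m^2\big)^{-1}f\rangle\ge0.$$
   Context: Let $\{E_k\}_{k\in\mathbb{Z}}$ be the canonical basis of $\ell^2(\mathbb{Z})$, $UE_k=E_{k+1}$, $\mathbb{K}E_k=kE_k$, and $a(\mathbb{K})E_k=a(k)E_k$ for $a:\mathbb{Z}\to\mathbb{C}$ (so $a(\mathbb{K})U=Ua(\mathbb{K}+1)$). A function $\beta$ has convergent increments if $k\mapsto\beta(k)-\beta(k-1)$ has finite limits as $k\to\pm\infty$. $\mathcal{H}$ is the Hilbert space of Hilbert–Schmidt operators on $\ell^2(\mathbb{Z})$ with $\langle f,g\rangle=\mathrm{tr}(f^*g)$; each $f\in\mathcal{H}$ is uniquely $f=\sum_nU^nf_n(\mathbb{K})$ with $\sum_{n,k}|f_n(k)|^2<\infty$. $\mathcal{D}\subset\mathcal{H}$ is the dense subspace of finite sums $\sum_nU^nf_n(\mathbb{K})$ with each $f_n$ finitely supported. $\Theta f=\sum_nU^nf_n(-\mathbb{K}-n)$, and $\mathcal{H}^+=\{f\in\mathcal{H}:f_n(k)=0\text{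 whenever }n+2k<0\}$. $D_\beta^*D_\beta$ denotes the nonnegative self-adjoint operator $\overline{D_\beta}^{\,*}\,\overline{D_\beta}$, where $\overline{D_\beta}$ is the closure of the densely defined operator $D_\beta$. *)

From Stdlib Require Import Reals ZArith List.
From Coquelicot Require Import Coquelicot.
Import ListNotations.
Open Scope R_scope.

(* An operator f = sum_n U^n f_n(K) is represented by its coefficient
   function  f n k = f_n(k)  (matrix entry <E_{k+n}, f E_k>). *)
Definition Op := Z -> Z -> C.

Definition sum_list {I : Type} (a : I -> C) (l : list I) : C :=
  fold_right (fun i acc => Cplus (a i) acc) (RtoC 0) l.

Definition rsum_list {I : Type} (a : I -> R) (l : list I) : R :=
  fold_right (fun i acc => a i + acc) 0 l.

Definition HasSum (a : Z * Z -> C) (s : C) : Prop :=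
  forall eps : R, 0 < eps -> exists F0 : list (Z * Z),
    forall F, NoDup F -> incl F0 F -> Cmod (Cminus (sum_list a F) s) < eps.

Definition sqnorm_le (f : Op) (c : R) : Prop :=
  forall l : list (Z * Z), NoDup l ->
    rsum_list (fun p => Cmod (f (fst p) (snd p)) ^ 2) l <= c.

(* membership in the Hilbert-Schmidt space H *)
Definition inH (f : Op) : Prop := exists c, sqnorm_le f c.

(* <f, g> = tr(f^* g) = sum_{n,k} conj(f_n(k)) g_n(k) has value s *)
Definition inner_is (f g : Op) (s : C) : Prop :=
  HasSum (fun p => Cmult (Cconj (f (fst p) (snd p))) (g (fst p) (snd p))) s.

Definition op_sub (f g : Op) : Op := fun n k => Cminus (f n k) (g n k).

Definition H_cvg (h : nat -> Op) (g : Op) : Prop :=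
  forall eps : R, 0 < eps -> exists N : nat, forall j, (N <= j)%nat ->
    sqnorm_le (op_sub (h j) g) eps.

(* the dense subspace D: finitely many nonzero coefficients *)
Definition inDom0 (f : Op) : Prop :=
  exists l : list (Z * Z), forall n k, ~ In (n, k) l -> f n k = RtoC 0.

(* Theta f = sum_n U^n f_n(-K-n) *)
Definition Theta (f : Op) : Op := fun n k => f n (- k - n)%Z.

Definition inHplus (f : Op) : Prop :=
  inH f /\ forall n k, (n + 2 * k < 0)%Z -> f n k = RtoC 0.

Definition conv_increments (beta : Z -> C) : Prop :=
  (exists L : C, forall eps, 0 < eps -> exists N : Z, forall k, (N <= k)%Z ->
      Cmod (Cminus (Cminus (beta k) (beta (k - 1)%Z)) L) < eps) /\
  (exists L : C, forall eps, 0 < eps -> exists N : Z, forall k, (k <= N)%Z ->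
      Cmod (Cminus (Cminus (beta k) (beta (k - 1)%Z)) L) < eps).

(* D_beta f = sum_n U^{n+1}( beta(K+n) f_n(K) - beta(-K-1) f_n(K+1) ),
   i.e. coefficient p = n+1 at k. (Only applied to f in D below.) *)
Definition Dbeta (beta : Z -> C) (f : Op) : Op :=
  fun p k => Cminus (Cmult (beta (k + p - 1)%Z) (f (p - 1)%Z k))
                    (Cmult (beta (- k - 1)%Z) (f (p - 1)%Z (k + 1)%Z)).

(* graph of the closure of D_beta : D -> H *)
Definition Dbar (beta : Z -> C) (g w : Op) : Prop :=
  inH g /\ inH w /\
  exists h : nat -> Op, (forall j, inDom0 (h j)) /\
    H_cvg h g /\ H_cvg (fun j => Dbeta beta (h j)) w.

(* graph of the adjoint of the closure: Dbar^* v = u *)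
Definition Dbar_adj (beta : Z -> C) (v u : Op) : Prop :=
  inH v /\ inH u /\
  forall h w, Dbar beta h w ->
    forall s1 s2, inner_is w v s1 -> inner_is h u s2 -> s1 = s2.

(* g = (Dbar^* Dbar + m2)^{-1} f *)
Definition is_resolvent (beta : Z -> C) (m2 : R) (f g : Op) : Prop :=
  exists w u, Dbar beta g w /\ Dbar_adj beta w u /\
    forall n k, Cplus (u n k) (Cmult (RtoC m2) (g n k)) = f n k.

(* [Theta] reflects the index [(n, k)] across the line [n + 2k = 0], [H^+] consists of the
   operators supported in the half-plane [n + 2k >= 0], and [D_beta] anticommutes with [Theta].
   Moreover, on [Theta]-odd operators [u], [D_beta (s u) = s0 (D_beta u)], where [s] and [s0]
   multiply by the sign of [n + 2k] (the latter vanishing on the line); [s] is unitary and [s0]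
   a contraction.

   Write [q(u) = |Dbar u|^2 + m2 |u|^2]. If [g] is the resolvent of [f], then [g_+- = g +- Theta g]
   are the resolvents of [f_+- = f +- Theta f], so that [<g_+-, f_+-> = q(g_+-)] and
   [4 <g, Theta f> = q(g_+) - q(g_-)]. For [f] in [H^+] one has [<s g_-, f_+> = <g_-, f_->], and
   the Cauchy-Schwarz inequality for the form of [q] gives
   [2 Re <s g_-, f_+> <= q(s g_-) + q(g_+) <= q(g_-) + q(g_+)], i.e. [q(g_-) <= q(g_+)].

   The resolvent exists because [q(u) - 2 Re <u, f>] attains its minimum on the graph of [Dbar]:
   by the parallelogram law a minimising sequence is Cauchy, and [H] is complete. *)

From Stdlib Require Import Reals ZArith List Lia Lra Psatz.
From Stdlib Require Import Classical ClassicalEpsilon FunctionalExtensionality.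
From Coquelicot Require Import Coquelicot.
Open Scope R_scope.

Ltac Cexpand :=
  repeat match goal with z : C |- _ => destruct z end;
  unfold Cconj, Cmult, Cplus, Cminus, Copp, RtoC, Ci, Re, Im in *; simpl in *.

Ltac Cring := Cexpand; apply injective_projections; simpl; ring.

Lemma rsum_list_cons {I} (a : I -> R) x l : rsum_list a (x :: l) = a x + rsum_list a l.
Proof. reflexivity. Qed.

Lemma sum_list_cons {I} (a : I -> C) x l : sum_list a (x :: l) = (a x + sum_list a l)%C.
Proof. reflexivity. Qed.

Section ListSums.
Context {I : Type}.

Lemma rsum_list_ext (a b : I -> R) l :
  (forall x, In x l -> a x = b x) -> rsum_list a l = rsum_list b l.
Proof.
  induction l as [|x l IH]; intros E; [reflexivity|].
  rewrite !rsum_list_cons, E, IH; auto with datatypes.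
Qed.

Lemma rsum_list_le (a b : I -> R) l :
  (forall x, In x l -> a x <= b x) -> rsum_list a l <= rsum_list b l.
Proof.
  induction l as [|x l IH]; intros E; [apply Rle_refl|].
  rewrite !rsum_list_cons. apply Rplus_le_compat; auto with datatypes.
Qed.

Lemma rsum_list_ge0 (a : I -> R) l : (forall x, 0 <= a x) -> 0 <= rsum_list a l.
Proof.
  intros Ha; induction l as [|x l IH]; [apply Rle_refl|].
  rewrite rsum_list_cons. specialize (Ha x); lra.
Qed.

Lemma rsum_list_lin (a b : I -> R) al be l :
  rsum_list (fun x => al * a x + be * b x) l = al * rsum_list a l + be * rsum_list b l.
Proof.
  induction l as [|x l IH]; [cbn; ring|]. rewrite !rsum_list_cons, IH. ring.
Qed.

Lemma rsum_list_map {J} (a : J -> R) (t : I -> J) l :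
  rsum_list a (map t l) = rsum_list (fun x => a (t x)) l.
Proof.
  induction l as [|x l IH]; [reflexivity|].
  cbn [map]. rewrite !rsum_list_cons, IH. reflexivity.
Qed.

Lemma sum_list_map {J} (a : J -> C) (t : I -> J) l :
  sum_list a (map t l) = sum_list (fun x => a (t x)) l.
Proof.
  induction l as [|x l IH]; [reflexivity|].
  cbn [map]. rewrite !sum_list_cons, IH. reflexivity.
Qed.

Lemma Re_sum_list (a : I -> C) l : Re (sum_list a l) = rsum_list (fun x => Re (a x)) l.
Proof.
  induction l as [|x l IH]; [reflexivity|].
  rewrite sum_list_cons, rsum_list_cons, <- IH. reflexivity.
Qed.

Lemma Im_sum_list (a : I -> C) l : Im (sum_list a l) = rsum_list (fun x => Im (a x)) l.
Proof.
  induction l as [|x l IH]; [reflexivity|].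
  rewrite sum_list_cons, rsum_list_cons, <- IH. reflexivity.
Qed.

Lemma sum_list_ext (a b : I -> C) l : (forall x, a x = b x) -> sum_list a l = sum_list b l.
Proof.
  intros E; induction l as [|x l IH]; [reflexivity|].
  rewrite !sum_list_cons, E, IH. reflexivity.
Qed.

Lemma sum_list_conj (a : I -> C) l : sum_list (fun x => Cconj (a x)) l = Cconj (sum_list a l).
Proof. induction l as [|x l IH]; [Cring|]. rewrite !sum_list_cons, IH, Cplus_conj. reflexivity. Qed.

Lemma NoDup_map_involutive (t : I -> I) l : (forall x, t (t x) = x) ->
  NoDup l -> NoDup (map t l).
Proof.
  intros Ht Hl. apply NoDup_map_NoDup_ForallPairs; auto.
  intros x y _ _ E. rewrite <- (Ht x), E, Ht; auto.
Qed.

End ListSums.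

Section DecidableLists.
Context {A : Type} (eq_dec : forall x y : A, {x = y} + {x <> y}).

Lemma common_superlist (F0 F1 : list A) : exists F, NoDup F /\ incl F0 F /\ incl F1 F.
Proof.
  exists (nodup eq_dec (F0 ++ F1)); split; [apply NoDup_nodup|].
  split; intros x Hx; apply nodup_In, in_or_app; auto.
Qed.

Lemma NoDup_remove_dec x l : NoDup l -> NoDup (remove eq_dec x l).
Proof.
  induction l as [|y l IH]; intros Hl; [constructor|].
  inversion Hl as [|? ? Hy Hl']; subst. cbn [remove].
  destruct (eq_dec x y); auto.
  constructor; auto. intros Hin. apply Hy. eapply in_remove; eauto.
Qed.

Lemma rsum_list_remove (a : A -> R) x l : NoDup l -> In x l ->
  rsum_list a l = a x + rsum_list a (remove eq_dec x l).
Proof.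
  induction l as [|y l IH]; intros Hl Hx; [contradiction|].
  inversion Hl as [|? ? Hy Hl']; subst. cbn [remove].
  destruct (eq_dec x y) as [<-|Hne].
  - rewrite notin_remove; auto.
  - destruct Hx as [->|Hx]; [congruence|].
    rewrite !rsum_list_cons, IH by auto; ring.
Qed.

Lemma rsum_list_le_support (a : A -> R) l L : (forall x, 0 <= a x) ->
  NoDup l -> NoDup L -> (forall x, In x l -> a x <> 0 -> In x L) ->
  rsum_list a l <= rsum_list a L.
Proof.
  intros Ha; revert L; induction l as [|x l IH]; intros L Hl HL Hsupp.
  - apply rsum_list_ge0, Ha.
  - inversion Hl as [|? ? Hx Hl']; subst. rewrite rsum_list_cons.
    destruct (Req_dec (a x) 0) as [E|E].
    + rewrite E, Rplus_0_l. apply IH; auto with datatypes.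
    + assert (HxL : In x L) by auto with datatypes.
      rewrite (rsum_list_remove a x L HL HxL).
      apply Rplus_le_compat_l, IH; auto using NoDup_remove_dec.
      intros y Hy Hay. apply in_in_remove; [intros ->; contradiction|auto with datatypes].
Qed.

End DecidableLists.

Definition Zpair_eq_dec : forall x y : Z * Z, {x = y} + {x <> y}.
Proof. decide equality; apply Z.eq_dec. Defined.

(** * Unconditional sums over [Z * Z] *)

Lemma Cmod_le_Re_Im z : Cmod z <= Rabs (Re z) + Rabs (Im z).
Proof.
  pose proof (Rabs_pos (Re z)); pose proof (Rabs_pos (Im z)).
  apply Rsqr_incr_0_var; [|lra]. unfold Rsqr.
  replace (Cmod z * Cmod z) with (Cmod z ^ 2) by ring.
  rewrite Cmod2_alt, <- (pow2_abs (Re z)), <- (pow2_abs (Im z)). nra.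
Qed.

Lemma Im_le_Cmod z : Rabs (Im z) <= Cmod z.
Proof. eapply Rle_trans; [apply Rmax_r|apply Rmax_Cmod]. Qed.

Definition RHasSum (a : Z * Z -> R) (s : R) : Prop :=
  forall eps, 0 < eps -> exists F0 : list (Z * Z),
    forall F, NoDup F -> incl F0 F -> Rabs (rsum_list a F - s) < eps.

Lemma RHasSum_unique a s t : RHasSum a s -> RHasSum a t -> s = t.
Proof.
  intros Hs Ht. destruct (Req_dec s t) as [|Hne]; auto. exfalso.
  assert (0 < Rabs (s - t)) by (apply Rabs_pos_lt; lra).
  assert (He : 0 < Rabs (s - t) / 2) by lra.
  destruct (Hs _ He) as [F0 H0], (Ht _ He) as [F1 H1].
  destruct (common_superlist Zpair_eq_dec F0 F1) as [F [HF [A B]]].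
  specialize (H0 F HF A); specialize (H1 F HF B).
  revert H0 H1; split_Rabs; lra.
Qed.

Lemma RHasSum_ext a b s : (forall x, a x = b x) -> RHasSum a s -> RHasSum b s.
Proof.
  intros E H eps He. destruct (H eps He) as [F0 H0]. exists F0. intros F HF Hi.
  rewrite <- (rsum_list_ext a b F) by auto. auto.
Qed.

Lemma RHasSum_0 : RHasSum (fun _ => 0) 0.
Proof.
  intros eps He. exists nil. intros F _ _.
  replace (rsum_list (fun _ => 0) F) with 0; [rewrite Rminus_0_r, Rabs_R0; auto|].
  induction F as [|x F IH]; [reflexivity|]. rewrite rsum_list_cons, <- IH; ring.
Qed.

Lemma RHasSum_lin a b s t al be : RHasSum a s -> RHasSum b t ->
  RHasSum (fun x => al * a x + be * b x) (al * s + be * t).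
Proof.
  intros Ha Hb eps He. set (K := Rabs al + Rabs be + 1).
  assert (HK : 0 < K) by (unfold K; pose proof (Rabs_pos al); pose proof (Rabs_pos be); lra).
  destruct (Ha (eps / K)) as [F0 H0]; [apply Rdiv_lt_0_compat; lra|].
  destruct (Hb (eps / K)) as [F1 H1]; [apply Rdiv_lt_0_compat; lra|].
  destruct (common_superlist Zpair_eq_dec F0 F1) as [F2 [_ [A B]]]. exists F2. intros F HF Hinc.
  specialize (H0 F HF (incl_tran A Hinc)). specialize (H1 F HF (incl_tran B Hinc)).
  rewrite rsum_list_lin.
  replace (al * rsum_list a F + be * rsum_list b F - (al * s + be * t))
    with (al * (rsum_list a F - s) + be * (rsum_list b F - t)) by ring.
  eapply Rle_lt_trans; [apply Rabs_triang|]. rewrite !Rabs_mult.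
  assert (Heps : Rabs al * (eps / K) + Rabs be * (eps / K) + eps / K = eps)
    by (unfold K in *; field; lra).
  assert (0 < eps / K) by (apply Rdiv_lt_0_compat; lra).
  assert (Rabs al * Rabs (rsum_list a F - s) <= Rabs al * (eps / K))
    by (apply Rmult_le_compat_l; [apply Rabs_pos|lra]).
  assert (Rabs be * Rabs (rsum_list b F - t) <= Rabs be * (eps / K))
    by (apply Rmult_le_compat_l; [apply Rabs_pos|lra]).
  lra.
Qed.

Lemma RHasSum_scal a s c : RHasSum a s -> RHasSum (fun x => c * a x) (c * s).
Proof.
  intros H. replace (c * s) with (c * s + 0 * s) by ring.
  eapply RHasSum_ext; [|exact (RHasSum_lin _ _ _ _ c 0 H H)]. intros x; simpl; ring.
Qed.

Lemma RHasSum_le a b s t : (forall x, a x <= b x) -> RHasSum a s -> RHasSum b t -> s <= t.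
Proof.
  intros E Ha Hb. apply Rnot_lt_le. intros Hlt.
  assert (He : 0 < (s - t) / 2) by lra.
  destruct (Ha _ He) as [F0 H0], (Hb _ He) as [F1 H1].
  destruct (common_superlist Zpair_eq_dec F0 F1) as [F [HF [A B]]].
  specialize (H0 F HF A); specialize (H1 F HF B).
  assert (rsum_list a F <= rsum_list b F) by (apply rsum_list_le; auto).
  revert H0 H1; split_Rabs; lra.
Qed.

Lemma RHasSum_partial_le a s l : (forall x, 0 <= a x) -> RHasSum a s ->
  NoDup l -> rsum_list a l <= s.
Proof.
  intros Ha Hs Hl. apply Rnot_lt_le. intros Hlt.
  destruct (Hs (rsum_list a l - s)) as [F0 H0]; [lra|].
  destruct (common_superlist Zpair_eq_dec l F0) as [F [HF [A B]]].
  specialize (H0 F HF B).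
  assert (rsum_list a l <= rsum_list a F) by (apply (rsum_list_le_support Zpair_eq_dec); auto).
  revert H0; split_Rabs; lra.
Qed.

Lemma RHasSum_le_bound a s c : RHasSum a s ->
  (forall l, NoDup l -> rsum_list a l <= c) -> s <= c.
Proof.
  intros Hs Hc. apply Rnot_lt_le. intros Hlt.
  destruct (Hs (s - c)) as [F0 H0]; [lra|].
  destruct (common_superlist Zpair_eq_dec F0 F0) as [F [HF [A _]]].
  specialize (H0 F HF A). specialize (Hc F HF).
  revert H0; split_Rabs; lra.
Qed.

Lemma RHasSum_sup a : (forall x, 0 <= a x) ->
  (exists c, forall l, NoDup l -> rsum_list a l <= c) -> exists s, RHasSum a s.
Proof.
  intros Ha [c Hc].
  set (E := fun r => exists l, NoDup l /\ r = rsum_list a l).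
  destruct (completeness E) as [m [Hub Hlub]].
  - exists c. intros r [l [Hl ->]]; auto.
  - exists 0, nil. split; [constructor|reflexivity].
  - exists m. intros eps He.
    destruct (classic (exists l, NoDup l /\ m - eps < rsum_list a l)) as [[l0 [Hl0 Hlt]]|Hno].
    + exists l0. intros F HF Hinc.
      assert (rsum_list a l0 <= rsum_list a F) by (apply (rsum_list_le_support Zpair_eq_dec); auto).
      assert (rsum_list a F <= m) by (apply Hub; exists F; auto).
      split_Rabs; lra.
    + exfalso. assert (m <= m - eps); [|lra]. apply Hlub. intros r [l [Hl ->]].
      apply Rnot_lt_le. intros Hlt. apply Hno. exists l; auto.
Qed.

Lemma HasSum_Re_Im a s :
  RHasSum (fun x => Re (a x)) (Re s) -> RHasSum (fun x => Im (a x)) (Im s) -> HasSum a s.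
Proof.
  intros H1 H2 eps He.
  destruct (H1 (eps / 2)) as [F0 A0]; [lra|]. destruct (H2 (eps / 2)) as [F1 A1]; [lra|].
  destruct (common_superlist Zpair_eq_dec F0 F1) as [F2 [_ [A B]]]. exists F2. intros F HF Hinc.
  specialize (A0 F HF (incl_tran A Hinc)). specialize (A1 F HF (incl_tran B Hinc)).
  eapply Rle_lt_trans; [apply Cmod_le_Re_Im|].
  rewrite <- Re_sum_list in A0. rewrite <- Im_sum_list in A1.
  unfold Re, Im in *; simpl in *. unfold Rminus in *. lra.
Qed.

Lemma HasSum_Re a s : HasSum a s -> RHasSum (fun x => Re (a x)) (Re s).
Proof.
  intros H eps He. destruct (H eps He) as [F0 H0]. exists F0. intros F HF Hi.
  eapply Rle_lt_trans; [|apply (H0 F HF Hi)].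
  rewrite <- Re_sum_list. replace (Re (sum_list a F) - Re s) with (Re (sum_list a F - s)%C)
    by (unfold Re; simpl; ring).
  apply re_le_Cmod.
Qed.

Lemma HasSum_Im a s : HasSum a s -> RHasSum (fun x => Im (a x)) (Im s).
Proof.
  intros H eps He. destruct (H eps He) as [F0 H0]. exists F0. intros F HF Hi.
  eapply Rle_lt_trans; [|apply (H0 F HF Hi)].
  rewrite <- Im_sum_list. replace (Im (sum_list a F) - Im s) with (Im (sum_list a F - s)%C)
    by (unfold Im; simpl; ring).
  apply Im_le_Cmod.
Qed.

Lemma HasSum_unique a s t : HasSum a s -> HasSum a t -> s = t.
Proof.
  intros Hs Ht. apply injective_projections.
  - exact (RHasSum_unique _ _ _ (HasSum_Re _ _ Hs) (HasSum_Re _ _ Ht)).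
  - exact (RHasSum_unique _ _ _ (HasSum_Im _ _ Hs) (HasSum_Im _ _ Ht)).
Qed.

Lemma HasSum_ext a b s : (forall x, a x = b x) -> HasSum a s -> HasSum b s.
Proof.
  intros E H eps He. destruct (H eps He) as [F0 H0]. exists F0. intros F HF Hi.
  rewrite <- (sum_list_ext a b F) by auto. auto.
Qed.

Lemma HasSum_plus a b s t :
  HasSum a s -> HasSum b t -> HasSum (fun x => a x + b x)%C (s + t)%C.
Proof.
  intros Ha Hb. apply HasSum_Re_Im.
  - replace (Re (s + t)%C) with (1 * Re s + 1 * Re t) by (unfold Re; simpl; ring).
    eapply RHasSum_ext; [|exact (RHasSum_lin _ _ _ _ 1 1 (HasSum_Re _ _ Ha) (HasSum_Re _ _ Hb))].
    intros x; unfold Re; simpl; ring.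
  - replace (Im (s + t)%C) with (1 * Im s + 1 * Im t) by (unfold Im; simpl; ring).
    eapply RHasSum_ext; [|exact (RHasSum_lin _ _ _ _ 1 1 (HasSum_Im _ _ Ha) (HasSum_Im _ _ Hb))].
    intros x; unfold Im; simpl; ring.
Qed.

Lemma HasSum_scal a s c : HasSum a s -> HasSum (fun x => c * a x)%C (c * s)%C.
Proof.
  intros Ha. pose proof (HasSum_Re _ _ Ha) as A. pose proof (HasSum_Im _ _ Ha) as B.
  apply HasSum_Re_Im.
  - replace (Re (c * s)%C) with (Re c * Re s + - Im c * Im s) by (Cexpand; ring).
    eapply RHasSum_ext; [|exact (RHasSum_lin _ _ _ _ _ _ A B)]. intros x; Cexpand; ring.
  - replace (Im (c * s)%C) with (Im c * Re s + Re c * Im s) by (Cexpand; ring).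
    eapply RHasSum_ext; [|exact (RHasSum_lin _ _ _ _ _ _ A B)]. intros x; Cexpand; ring.
Qed.

Lemma HasSum_conj a s : HasSum a s -> HasSum (fun x => Cconj (a x)) (Cconj s).
Proof.
  intros Ha eps He. destruct (Ha eps He) as [F0 H0]. exists F0. intros F HF Hi.
  rewrite sum_list_conj, <- Cminus_conj, Cmod_conj. auto.
Qed.

Lemma HasSum_reindex (t : Z * Z -> Z * Z) a s : (forall x, t (t x) = x) ->
  HasSum a s -> HasSum (fun x => a (t x)) s.
Proof.
  intros Ht H eps He. destruct (H eps He) as [F0 H0]. exists (map t F0). intros F HF Hi.
  rewrite <- sum_list_map. apply H0.
  - apply NoDup_map_involutive; auto.
  - intros y Hy. rewrite <- (Ht y). apply in_map, Hi, in_map, Hy.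
Qed.

(** * The Hilbert-Schmidt space *)

Lemma Cmod2_add_le z w : Cmod (z + w) ^ 2 <= 2 * Cmod z ^ 2 + 2 * Cmod w ^ 2.
Proof.
  rewrite !Cmod2_alt. destruct z as [a b], w as [c d]. unfold Re, Im; simpl.
  pose proof (pow2_ge_0 (a - c)); pose proof (pow2_ge_0 (b - d)). nra.
Qed.

Lemma Cmod2_sub_le z w : Cmod (z - w) ^ 2 <= 2 * Cmod z ^ 2 + 2 * Cmod w ^ 2.
Proof. unfold Cminus. rewrite <- (Cmod_opp w). apply Cmod2_add_le. Qed.

Lemma Cmod2_mult c z : Cmod (c * z) ^ 2 = Cmod c ^ 2 * Cmod z ^ 2.
Proof. rewrite Cmod_mult. ring. Qed.

Definition op_add (f g : Op) : Op := fun n k => (f n k + g n k)%C.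
Definition op_scal (c : C) (f : Op) : Op := fun n k => (c * f n k)%C.

Lemma Op_ext (f g : Op) : (forall n k, f n k = g n k) -> f = g.
Proof. intros E. do 2 (apply functional_extensionality; intro). apply E. Qed.

Lemma op_sub_add_scal f g : op_sub f g = op_add f (op_scal (RtoC (-1)) g).
Proof. apply Op_ext; intros n k. unfold op_sub, op_add, op_scal. Cring. Qed.

Lemma op_add_scal_1 f g : op_add f (op_scal (RtoC 1) g) = op_add f g.
Proof. apply Op_ext; intros n k. unfold op_add, op_scal. Cring. Qed.

Lemma op_sub_scal_m1 f g : op_sub f (op_scal (RtoC (-1)) g) = op_add f g.
Proof. apply Op_ext; intros n k. unfold op_sub, op_add, op_scal. Cring. Qed.

Definition theta_idx (p : Z * Z) : Z * Z := (fst p, - snd p - fst p)%Z.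

Lemma theta_idx_involutive p : theta_idx (theta_idx p) = p.
Proof. destruct p; unfold theta_idx; simpl. f_equal. lia. Qed.

Lemma Theta_involutive f : Theta (Theta f) = f.
Proof. apply Op_ext; intros n k. unfold Theta. f_equal. lia. Qed.

Lemma sqnorm_le_dom f a b al be c1 c2 : 0 <= al -> 0 <= be ->
  (forall n k, Cmod (f n k) ^ 2 <= al * Cmod (a n k) ^ 2 + be * Cmod (b n k) ^ 2) ->
  sqnorm_le a c1 -> sqnorm_le b c2 -> sqnorm_le f (al * c1 + be * c2).
Proof.
  intros Hal Hbe Hd Ha Hb l Hl.
  eapply Rle_trans; [apply rsum_list_le; intros x _; apply Hd|].
  rewrite rsum_list_lin. specialize (Ha l Hl). specialize (Hb l Hl). nra.
Qed.

Lemma inH_dom f a b al be : 0 <= al -> 0 <= be ->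
  (forall n k, Cmod (f n k) ^ 2 <= al * Cmod (a n k) ^ 2 + be * Cmod (b n k) ^ 2) ->
  inH a -> inH b -> inH f.
Proof.
  intros Hal Hbe Hd [c1 Ha] [c2 Hb].
  eexists. exact (sqnorm_le_dom _ _ _ _ _ _ _ Hal Hbe Hd Ha Hb).
Qed.

Lemma sqnorm_le_Theta f c : sqnorm_le f c -> sqnorm_le (Theta f) c.
Proof.
  intros H l Hl. specialize (H (map theta_idx l)).
  rewrite rsum_list_map in H. apply H, NoDup_map_involutive; auto using theta_idx_involutive.
Qed.

Lemma inH_Theta f : inH f -> inH (Theta f).
Proof. intros [c H]. exists c. apply sqnorm_le_Theta, H. Qed.

Lemma inH_add f g : inH f -> inH g -> inH (op_add f g).
Proof. apply inH_dom with (al := 2) (be := 2); try lra. intros; apply Cmod2_add_le. Qed.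

Lemma inH_sub f g : inH f -> inH g -> inH (op_sub f g).
Proof. apply inH_dom with (al := 2) (be := 2); try lra. intros; apply Cmod2_sub_le. Qed.

Lemma inH_scal c f : inH f -> inH (op_scal c f).
Proof.
  intros Hf. apply (inH_dom _ f f (Cmod c ^ 2) 0); auto using pow2_ge_0; try lra.
  intros n k. unfold op_scal. rewrite Cmod2_mult. lra.
Qed.

Definition ip (f g : Op) : C := epsilon (inhabits (RtoC 0)) (fun s => inner_is f g s).

Lemma ip_unique f g s : inner_is f g s -> ip f g = s.
Proof.
  intros H. eapply HasSum_unique; [|exact H].
  exact (epsilon_spec (inhabits (RtoC 0)) _ (ex_intro _ s H)).
Qed.

Lemma sqnorm_summable f : inH f -> exists s, RHasSum (fun p => Cmod (f (fst p) (snd p)) ^ 2) s.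
Proof. intros [c H]. apply RHasSum_sup; eauto using pow2_ge_0. Qed.

Lemma Re_conj_mult_polar a b :
  Re (Cconj a * b)%C = / 4 * Cmod (a + b) ^ 2 + - / 4 * Cmod (a - b) ^ 2.
Proof. rewrite !Cmod2_alt. Cexpand. field. Qed.

Lemma Im_conj_mult_polar a b :
  Im (Cconj a * b)%C = / 4 * Cmod (a - Ci * b) ^ 2 + - / 4 * Cmod (a + Ci * b) ^ 2.
Proof. rewrite !Cmod2_alt. Cexpand. field. Qed.

Lemma ip_spec f g : inH f -> inH g -> inner_is f g (ip f g).
Proof.
  intros Hf Hg. pose proof (inH_scal Ci g Hg) as Hig.
  destruct (sqnorm_summable (op_add f g)) as [s1 H1]; [apply inH_add; auto|].
  destruct (sqnorm_summable (op_sub f g)) as [s2 H2]; [apply inH_sub; auto|].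
  destruct (sqnorm_summable (op_sub f (op_scal Ci g))) as [s3 H3]; [apply inH_sub; auto|].
  destruct (sqnorm_summable (op_add f (op_scal Ci g))) as [s4 H4]; [apply inH_add; auto|].
  assert (HS : inner_is f g (/ 4 * s1 + - / 4 * s2, / 4 * s3 + - / 4 * s4)).
  { apply HasSum_Re_Im.
    - eapply RHasSum_ext; [|exact (RHasSum_lin _ _ _ _ _ _ H1 H2)].
      intros x. symmetry. apply Re_conj_mult_polar.
    - eapply RHasSum_ext; [|exact (RHasSum_lin _ _ _ _ _ _ H3 H4)].
      intros x. symmetry. apply Im_conj_mult_polar. }
  rewrite (ip_unique _ _ _ HS). exact HS.
Qed.

Definition hnorm2 (f : Op) : R := Re (ip f f).

Lemma hnorm2_spec f : inH f -> RHasSum (fun p => Cmod (f (fst p) (snd p)) ^ 2) (hnorm2 f).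
Proof.
  intros Hf. eapply RHasSum_ext; [|exact (HasSum_Re _ _ (ip_spec f f Hf Hf))].
  intros x. rewrite Cmod2_alt. Cexpand. ring.
Qed.

Lemma ip_self f : inH f -> ip f f = RtoC (hnorm2 f).
Proof.
  intros Hf. apply injective_projections; [reflexivity|]. simpl.
  eapply RHasSum_unique; [exact (HasSum_Im _ _ (ip_spec f f Hf Hf))|].
  eapply RHasSum_ext; [|exact RHasSum_0]. intros x. Cexpand. ring.
Qed.

Lemma hnorm2_ge0 f : inH f -> 0 <= hnorm2 f.
Proof.
  intros Hf. change 0 with (rsum_list (fun p => Cmod (f (fst p) (snd p)) ^ 2) nil).
  apply RHasSum_partial_le; auto using hnorm2_spec, pow2_ge_0. constructor.
Qed.

Lemma sqnorm_le_of_hnorm2_le f c : inH f -> hnorm2 f <= c -> sqnorm_le f c.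
Proof.
  intros Hf Hc l Hl. eapply Rle_trans; [|exact Hc].
  apply RHasSum_partial_le; auto using hnorm2_spec, pow2_ge_0.
Qed.

Lemma hnorm2_le f c : sqnorm_le f c -> hnorm2 f <= c.
Proof. intros H. eapply RHasSum_le_bound; [apply hnorm2_spec; exists c|]; exact H. Qed.

Lemma ip_conj f g : inH f -> inH g -> ip g f = Cconj (ip f g).
Proof.
  intros Hf Hg. apply ip_unique.
  eapply HasSum_ext; [|exact (HasSum_conj _ _ (ip_spec f g Hf Hg))].
  intros x. simpl. Cring.
Qed.

Lemma ip_add_r f g1 g2 : inH f -> inH g1 -> inH g2 ->
  ip f (op_add g1 g2) = (ip f g1 + ip f g2)%C.
Proof.
  intros Hf H1 H2. apply ip_unique.
  eapply HasSum_ext; [|exact (HasSum_plus _ _ _ _ (ip_spec f g1 Hf H1) (ip_spec f g2 Hf H2))].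
  intros x. unfold op_add. Cring.
Qed.

Lemma ip_scal_r f g c : inH f -> inH g -> ip f (op_scal c g) = (c * ip f g)%C.
Proof.
  intros Hf Hg. apply ip_unique.
  eapply HasSum_ext; [|exact (HasSum_scal _ _ c (ip_spec f g Hf Hg))].
  intros x. unfold op_scal. Cring.
Qed.

Lemma ip_add_l f1 f2 g : inH f1 -> inH f2 -> inH g ->
  ip (op_add f1 f2) g = (ip f1 g + ip f2 g)%C.
Proof.
  intros. rewrite ip_conj, ip_add_r, Cplus_conj, <- !ip_conj; auto using inH_add.
Qed.

Lemma ip_scal_l f g c : inH f -> inH g -> ip (op_scal c f) g = (Cconj c * ip f g)%C.
Proof.
  intros. rewrite ip_conj, ip_scal_r, Cmult_conj, <- !ip_conj; auto using inH_scal.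
Qed.

Lemma ip_sub_r f g1 g2 : inH f -> inH g1 -> inH g2 ->
  ip f (op_sub g1 g2) = (ip f g1 - ip f g2)%C.
Proof.
  intros. rewrite op_sub_add_scal, ip_add_r, ip_scal_r; auto using inH_scal. Cring.
Qed.

Lemma ip_sub_l f1 f2 g : inH f1 -> inH f2 -> inH g ->
  ip (op_sub f1 f2) g = (ip f1 g - ip f2 g)%C.
Proof.
  intros. rewrite op_sub_add_scal, ip_add_l, ip_scal_l; auto using inH_scal. Cring.
Qed.

Lemma ip_ext f g f' g' : inH f -> inH g ->
  (forall n k, (Cconj (f n k) * g n k = Cconj (f' n k) * g' n k)%C) -> ip f g = ip f' g'.
Proof.
  intros Hf Hg E. symmetry. apply ip_unique.
  eapply HasSum_ext; [|exact (ip_spec f g Hf Hg)]. intros x. apply E.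
Qed.

Lemma ip_Theta f g : inH f -> inH g -> ip (Theta f) (Theta g) = ip f g.
Proof.
  intros Hf Hg. apply ip_unique.
  eapply HasSum_ext; [|exact (HasSum_reindex _ _ _ theta_idx_involutive (ip_spec f g Hf Hg))].
  reflexivity.
Qed.

Lemma ip_Theta_l f g : inH f -> inH g -> ip (Theta f) g = ip f (Theta g).
Proof.
  intros. rewrite <- (ip_Theta f (Theta g)), Theta_involutive; auto using inH_Theta.
Qed.

Lemma hnorm2_add f g : inH f -> inH g ->
  hnorm2 (op_add f g) = hnorm2 f + 2 * Re (ip f g) + hnorm2 g.
Proof.
  intros. unfold hnorm2. rewrite ip_add_l, !ip_add_r, (ip_conj f g); auto using inH_add.
  Cexpand. ring.
Qed.

Lemma hnorm2_sub f g : inH f -> inH g ->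
  hnorm2 (op_sub f g) = hnorm2 f - 2 * Re (ip f g) + hnorm2 g.
Proof.
  intros. unfold hnorm2. rewrite ip_sub_l, !ip_sub_r, (ip_conj f g); auto using inH_sub.
  Cexpand. ring.
Qed.

Lemma hnorm2_scal f c : inH f -> hnorm2 (op_scal c f) = Cmod c ^ 2 * hnorm2 f.
Proof.
  intros. unfold hnorm2 at 1. rewrite ip_scal_l, ip_scal_r, ip_self, Cmod2_alt; auto using inH_scal.
  Cexpand. ring.
Qed.

Lemma hnorm2_add_scal f g c : inH f -> inH g ->
  hnorm2 (op_add f (op_scal c g)) = hnorm2 f + 2 * Re (c * ip f g) + Cmod c ^ 2 * hnorm2 g.
Proof. intros. rewrite hnorm2_add, ip_scal_r, hnorm2_scal; auto using inH_scal. Qed.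

Lemma Re_conj_mult_le u v t : 0 < t ->
  2 * Re (Cconj u * v)%C <= t * Cmod u ^ 2 + / t * Cmod v ^ 2.
Proof.
  intros Ht. rewrite !Cmod2_alt. destruct u as [u1 u2], v as [v1 v2]. unfold Re, Im; simpl.
  assert (E : t * (u1 ^ 2 + u2 ^ 2) + / t * (v1 ^ 2 + v2 ^ 2) - 2 * (u1 * v1 - - u2 * v2)
              = / t * ((t * u1 - v1) ^ 2 + (t * u2 - v2) ^ 2)) by (field; lra).
  pose proof (pow2_ge_0 (t * u1 - v1)); pose proof (pow2_ge_0 (t * u2 - v2)).
  assert (0 <= / t * ((t * u1 - v1) ^ 2 + (t * u2 - v2) ^ 2))
    by (apply Rmult_le_pos; [apply Rlt_le, Rinv_0_lt_compat|]; lra).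
  lra.
Qed.

Lemma ip_Re_le a b t : inH a -> inH b -> 0 < t ->
  2 * Re (ip a b) <= t * hnorm2 a + / t * hnorm2 b.
Proof.
  intros Ha Hb Ht.
  pose proof (HasSum_Re _ _ (ip_spec a b Ha Hb)) as A.
  pose proof (RHasSum_lin _ _ _ _ t (/ t) (hnorm2_spec a Ha) (hnorm2_spec b Hb)) as B.
  eapply RHasSum_le; [|exact (RHasSum_scal _ _ 2 A)|exact B].
  intros x. apply Re_conj_mult_le, Ht.
Qed.

Lemma ip_Rabs_Re_le a b t : inH a -> inH b -> 0 < t ->
  2 * Rabs (Re (ip a b)) <= t * hnorm2 a + / t * hnorm2 b.
Proof.
  intros Ha Hb Ht. pose proof (ip_Re_le a b t Ha Hb Ht).
  pose proof (ip_Re_le a (op_scal (RtoC (-1)) b) t Ha (inH_scal _ _ Hb) Ht) as Hn.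
  rewrite ip_scal_r, hnorm2_scal, Cmod2_alt in Hn by auto.
  revert Hn. Cexpand. split_Rabs; lra.
Qed.

Lemma is_lim_seq_of_eps (u : nat -> R) l :
  (forall eps, 0 < eps -> exists N, forall j, (N <= j)%nat -> Rabs (u j - l) < eps) ->
  is_lim_seq u l.
Proof. intros H. apply is_lim_seq_spec. intros eps. apply H, cond_pos. Qed.

Lemma Re_ip_cvg a h g : inH a -> (forall j, inH (h j)) -> inH g -> H_cvg h g ->
  is_lim_seq (fun j => Re (ip a (h j))) (Re (ip a g)).
Proof.
  intros Ha Hh Hg Hc. apply is_lim_seq_of_eps. intros eps He.
  pose proof (hnorm2_ge0 a Ha). set (t := eps / (hnorm2 a + 1)).
  assert (Ht : 0 < t) by (apply Rdiv_lt_0_compat; lra).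
  assert (Hta : t * hnorm2 a < eps).
  { unfold t. apply (Rmult_lt_reg_r (hnorm2 a + 1)); [lra|]. field_simplify; nra. }
  destruct (Hc (eps * t)) as [N HN]; [nra|]. exists N. intros j Hj.
  assert (Hd : inH (op_sub (h j) g)) by (apply inH_sub; auto).
  pose proof (ip_Rabs_Re_le a _ t Ha Hd Ht) as B.
  pose proof (hnorm2_le _ _ (HN j Hj)).
  assert (/ t * hnorm2 (op_sub (h j) g) <= eps).
  { replace eps with (/ t * (eps * t)) by (field; lra).
    apply Rmult_le_compat_l; [apply Rlt_le, Rinv_0_lt_compat|]; lra. }
  rewrite ip_sub_r in B by auto. revert B. Cexpand. unfold Rminus. lra.
Qed.

Lemma hnorm2_sub_cvg h g : (forall j, inH (h j)) -> inH g -> H_cvg h g ->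
  is_lim_seq (fun j => hnorm2 (op_sub (h j) g)) 0.
Proof.
  intros Hh Hg Hc. apply is_lim_seq_of_eps. intros eps He.
  destruct (Hc (eps / 2)) as [N HN]; [lra|]. exists N. intros j Hj.
  pose proof (hnorm2_le _ _ (HN j Hj)). pose proof (hnorm2_ge0 _ (inH_sub _ _ (Hh j) Hg)).
  split_Rabs; lra.
Qed.

Lemma hnorm2_cvg h g : (forall j, inH (h j)) -> inH g -> H_cvg h g ->
  is_lim_seq (fun j => hnorm2 (h j)) (hnorm2 g).
Proof.
  intros Hh Hg Hc.
  assert (E : forall j, hnorm2 (op_sub (h j) g) + 2 * Re (ip g (h j)) - hnorm2 g = hnorm2 (h j)).
  { intros j. rewrite hnorm2_sub, (ip_conj g (h j)), re_conj by auto. ring. }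
  eapply is_lim_seq_ext; [exact E|].
  replace (Finite (hnorm2 g)) with (Finite (0 + 2 * Re (ip g g) - hnorm2 g))
    by (f_equal; unfold hnorm2; ring).
  apply is_lim_seq_minus'; [|apply is_lim_seq_const].
  apply is_lim_seq_plus'; [apply hnorm2_sub_cvg; auto|].
  apply (is_lim_seq_scal_l _ 2 (Re (ip g g))), Re_ip_cvg; auto.
Qed.

Lemma Re_ip_cvg_l a h g : inH a -> (forall j, inH (h j)) -> inH g -> H_cvg h g ->
  is_lim_seq (fun j => Re (ip (h j) a)) (Re (ip g a)).
Proof.
  intros Ha Hh Hg Hc. rewrite (ip_conj a g), re_conj by auto.
  eapply is_lim_seq_ext; [|exact (Re_ip_cvg a h g Ha Hh Hg Hc)].
  intros j. rewrite (ip_conj a (h j)), re_conj; auto.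
Qed.

Lemma sqnorm_le_pt f c n k : sqnorm_le f c -> Cmod (f n k) ^ 2 <= c.
Proof.
  intros H. specialize (H ((n, k) :: nil)). rewrite rsum_list_cons in H.
  simpl in H. rewrite Rplus_0_r in H. apply H. repeat constructor. auto.
Qed.

Lemma Cmod2_cvg (u : nat -> C) z :
  is_lim_seq (fun j => Re (u j)) (Re z) -> is_lim_seq (fun j => Im (u j)) (Im z) ->
  is_lim_seq (fun j => Cmod (u j) ^ 2) (Cmod z ^ 2).
Proof.
  intros A B. rewrite Cmod2_alt.
  eapply is_lim_seq_ext; [intros j; symmetry; apply Cmod2_alt|]. simpl.
  apply is_lim_seq_plus'; apply is_lim_seq_mult'; auto;
    apply is_lim_seq_mult'; auto; apply is_lim_seq_const.
Qed.

Lemma rsum_list_cvg (a : nat -> Z * Z -> R) (b : Z * Z -> R) l :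
  (forall x, is_lim_seq (fun j => a j x) (b x)) ->
  is_lim_seq (fun j => rsum_list (a j) l) (rsum_list b l).
Proof.
  intros H. induction l as [|x l IH]; [apply is_lim_seq_const|].
  exact (is_lim_seq_plus' _ _ _ _ (H x) IH).
Qed.

Definition H_Cauchy (h : nat -> Op) : Prop :=
  forall eps, 0 < eps -> exists N, forall i j, (N <= i)%nat -> (N <= j)%nat ->
    sqnorm_le (op_sub (h i) (h j)) eps.

Definition pointwise_cvg (h : nat -> Op) (g : Op) : Prop :=
  forall n k, is_lim_seq (fun j => Re (h j n k)) (Re (g n k)) /\
              is_lim_seq (fun j => Im (h j n k)) (Im (g n k)).

Lemma H_Cauchy_entry h n k : H_Cauchy h ->
  forall eps, 0 < eps -> exists N, forall i j, (N <= i)%nat -> (N <= j)%nat ->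
    Cmod (h i n k - h j n k)%C < eps.
Proof.
  intros Hc eps He. destruct (Hc (eps * eps / 4)) as [N HN]; [nra|]. exists N. intros i j Hi Hj.
  pose proof (sqnorm_le_pt _ _ n k (HN i j Hi Hj)) as Hij.
  assert (Cmod (h i n k - h j n k)%C <= eps / 2); [|lra].
  apply Rsqr_incr_0_var; [unfold Rsqr, op_sub in *; nra|lra].
Qed.

Lemma H_Cauchy_pointwise_cvg h : H_Cauchy h -> exists g, pointwise_cvg h g.
Proof.
  intros Hc.
  assert (CRe : forall n k, ex_finite_lim_seq (fun j => Re (h j n k))).
  { intros n k. apply ex_lim_seq_cauchy_corr. intros eps.
    destruct (H_Cauchy_entry h n k Hc eps (cond_pos eps)) as [N HN]. exists N. intros i j Hi Hj.
    eapply Rle_lt_trans; [|exact (HN i j Hi Hj)].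
    replace (Re (h i n k) - Re (h j n k)) with (Re (h i n k - h j n k)%C)
      by (unfold Re; simpl; ring).
    apply re_le_Cmod. }
  assert (CIm : forall n k, ex_finite_lim_seq (fun j => Im (h j n k))).
  { intros n k. apply ex_lim_seq_cauchy_corr. intros eps.
    destruct (H_Cauchy_entry h n k Hc eps (cond_pos eps)) as [N HN]. exists N. intros i j Hi Hj.
    eapply Rle_lt_trans; [|exact (HN i j Hi Hj)].
    replace (Im (h i n k) - Im (h j n k)) with (Im (h i n k - h j n k)%C)
      by (unfold Im; simpl; ring).
    apply Im_le_Cmod. }
  exists (fun n k => (real (Lim_seq (fun j => Re (h j n k))),
                     real (Lim_seq (fun j => Im (h j n k))))).
  intros n k. split; apply Lim_seq_correct'; auto.
Qed.

Lemma sqnorm_le_pointwise_lim f h g c N : pointwise_cvg h g ->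
  (forall j, (N <= j)%nat -> sqnorm_le (op_sub f (h j)) c) -> sqnorm_le (op_sub f g) c.
Proof.
  intros Hl Hc l Hnd.
  assert (L : is_lim_seq (fun j => rsum_list (fun p => Cmod (op_sub f (h j) (fst p) (snd p)) ^ 2) l)
                         (rsum_list (fun p => Cmod (op_sub f g (fst p) (snd p)) ^ 2) l)).
  { apply rsum_list_cvg. intros [n k]. destruct (Hl n k) as [A B].
    apply Cmod2_cvg; unfold op_sub; simpl.
    - exact (is_lim_seq_minus' _ _ _ _ (is_lim_seq_const _) A).
    - exact (is_lim_seq_minus' _ _ _ _ (is_lim_seq_const _) B). }
  assert (Le : Rbar_le (rsum_list (fun p => Cmod (op_sub f g (fst p) (snd p)) ^ 2) l) c).
  { eapply is_lim_seq_le_loc; [|exact L|apply is_lim_seq_const].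
    exists N. intros j Hj. apply Hc; auto. }
  exact Le.
Qed.

Lemma H_complete h : (forall j, inH (h j)) -> H_Cauchy h -> exists g, inH g /\ H_cvg h g.
Proof.
  intros Hh Hc. destruct (H_Cauchy_pointwise_cvg h Hc) as [g Hg].
  assert (Cvg : H_cvg h g).
  { intros eps He. destruct (Hc eps He) as [N HN]. exists N. intros i Hi.
    apply (sqnorm_le_pointwise_lim _ h _ _ N Hg). intros j Hj. apply HN; auto. }
  exists g. split; [|exact Cvg].
  destruct (Cvg 1 Rlt_0_1) as [N HN].
  apply (inH_dom g (h N) (op_sub (h N) g) 2 2); try lra; auto; [|exists 1; auto].
  intros n k. unfold op_sub.
  replace (g n k) with (h N n k - (h N n k - g n k))%C at 1 by ring. apply Cmod2_sub_le.
Qed.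

(** * [Theta], the sign maps and the closure of [Dbeta] *)

Definition sign_op (a : Op) : Op :=
  fun n k => if Z_le_dec 0 (n + 2 * k) then a n k else (- a n k)%C.

Definition sign0_op (a : Op) : Op :=
  fun n k => if Z.eq_dec (n + 2 * k) 0 then RtoC 0 else sign_op a n k.

Lemma Cmod_sign_op a n k : Cmod (sign_op a n k) = Cmod (a n k).
Proof. unfold sign_op. destruct Z_le_dec; auto using Cmod_opp. Qed.

Lemma Cmod_sign0_op_le a n k : Cmod (sign0_op a n k) <= Cmod (a n k).
Proof.
  unfold sign0_op. destruct Z.eq_dec; [|rewrite Cmod_sign_op; lra].
  rewrite Cmod_0. apply Cmod_ge_0.
Qed.

Lemma inH_sign_op a : inH a -> inH (sign_op a).
Proof.
  intros Ha. apply (inH_dom _ a a 1 0); auto; try lra.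
  intros n k. rewrite Cmod_sign_op. pose proof (pow2_ge_0 (Cmod (a n k))). lra.
Qed.

Lemma inH_sign0_op a : inH a -> inH (sign0_op a).
Proof.
  intros Ha. apply (inH_dom _ a a 1 0); auto; try lra.
  intros n k. pose proof (Cmod_sign0_op_le a n k). pose proof (Cmod_ge_0 (sign0_op a n k)).
  pose proof (pow2_ge_0 (Cmod (a n k))). nra.
Qed.

Lemma hnorm2_sign_op a : inH a -> hnorm2 (sign_op a) = hnorm2 a.
Proof.
  intros Ha. eapply RHasSum_unique; [apply hnorm2_spec, inH_sign_op, Ha|].
  eapply RHasSum_ext; [|apply hnorm2_spec, Ha]. intros p. cbv beta. rewrite Cmod_sign_op; auto.
Qed.

Lemma hnorm2_sign0_op_le a : inH a -> hnorm2 (sign0_op a) <= hnorm2 a.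
Proof.
  intros Ha. eapply RHasSum_le; [|apply hnorm2_spec, inH_sign0_op, Ha|apply hnorm2_spec, Ha].
  intros p. cbv beta. apply pow_incr. split; [apply Cmod_ge_0|apply Cmod_sign0_op_le].
Qed.

Lemma inDom0_dom a b c : inDom0 a -> inDom0 b ->
  (forall n k, a n k = RtoC 0 -> b n k = RtoC 0 -> c n k = RtoC 0) -> inDom0 c.
Proof.
  intros [l1 H1] [l2 H2] Hc. exists (l1 ++ l2). intros n k Hn.
  apply Hc; [apply H1|apply H2]; intros Hi; apply Hn, in_or_app; auto.
Qed.

Lemma inDom0_add a b : inDom0 a -> inDom0 b -> inDom0 (op_add a b).
Proof.
  intros Ha Hb. apply (inDom0_dom a b); auto.
  intros n k A B. unfold op_add. rewrite A, B. Cring.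
Qed.

Lemma inDom0_scal c a : inDom0 a -> inDom0 (op_scal c a).
Proof.
  intros Ha. apply (inDom0_dom a a); auto.
  intros n k A _. unfold op_scal. rewrite A. Cring.
Qed.

Lemma inDom0_sub a b : inDom0 a -> inDom0 b -> inDom0 (op_sub a b).
Proof. intros. rewrite op_sub_add_scal. auto using inDom0_add, inDom0_scal. Qed.

Lemma inDom0_sign_op a : inDom0 a -> inDom0 (sign_op a).
Proof.
  intros Ha. apply (inDom0_dom a a); auto. intros n k A _. unfold sign_op. rewrite A.
  destruct Z_le_dec; Cring.
Qed.

Lemma inDom0_Theta a : inDom0 a -> inDom0 (Theta a).
Proof.
  intros [l H]. exists (map theta_idx l). intros n k Hn. apply H. intros Hi. apply Hn.
  replace (n, k) with (theta_idx (n, (- k - n)%Z)) by (unfold theta_idx; simpl; f_equal; lia).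
  apply in_map, Hi.
Qed.

Lemma inDom0_Dbeta beta a : inDom0 a -> inDom0 (Dbeta beta a).
Proof.
  intros [l H].
  exists (map (fun p => (fst p + 1, snd p)%Z) l ++ map (fun p => (fst p + 1, snd p - 1)%Z) l).
  intros n k Hn. unfold Dbeta. rewrite !H; [Cring| |];
    intros Hi; apply Hn, in_or_app; [right|left]; apply in_map_iff.
  - exists ((n - 1)%Z, (k + 1)%Z). split; auto. simpl; f_equal; lia.
  - exists ((n - 1)%Z, k). split; auto. simpl; f_equal; lia.
Qed.

Lemma inH_of_inDom0 a : inDom0 a -> inH a.
Proof.
  intros [l H]. exists (rsum_list (fun p => Cmod (a (fst p) (snd p)) ^ 2) (nodup Zpair_eq_dec l)).
  intros l' Hl'. apply (rsum_list_le_support Zpair_eq_dec); auto using pow2_ge_0, NoDup_nodup.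
  intros [n k] _ Hne. apply nodup_In. destruct (in_dec Zpair_eq_dec (n, k) l) as [|Hn]; auto.
  exfalso. apply Hne. simpl. rewrite H, Cmod_0 by auto. ring.
Qed.

Lemma Dbeta_add beta a b : Dbeta beta (op_add a b) = op_add (Dbeta beta a) (Dbeta beta b).
Proof. apply Op_ext; intros n k. unfold Dbeta, op_add. ring. Qed.

Lemma Dbeta_scal beta c a : Dbeta beta (op_scal c a) = op_scal c (Dbeta beta a).
Proof. apply Op_ext; intros n k. unfold Dbeta, op_scal. ring. Qed.

Lemma Dbeta_Theta beta a :
  Dbeta beta (Theta a) = op_scal (RtoC (-1)) (Theta (Dbeta beta a)).
Proof.
  apply Op_ext; intros p k. unfold Dbeta, Theta, op_scal.
  replace (- k - (p - 1))%Z with (- k - p + 1)%Z by lia.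
  replace (- (k + 1) - (p - 1))%Z with (- k - p)%Z by lia.
  replace (- k - p + p - 1)%Z with (- k - 1)%Z by lia.
  replace (- (- k - p) - 1)%Z with (k + p - 1)%Z by lia.
  ring.
Qed.

Lemma Dbeta_sign beta a :
  Dbeta beta (sign_op (op_sub a (Theta a))) =
  sign0_op (op_add (Dbeta beta a) (Theta (Dbeta beta a))).
Proof.
  apply Op_ext; intros p k. unfold Dbeta, sign0_op, sign_op, op_sub, op_add, Theta.
  replace (- k - (p - 1))%Z with (- k - p + 1)%Z by lia.
  replace (- (k + 1) - (p - 1))%Z with (- k - p)%Z by lia.
  replace (- k - p + p - 1)%Z with (- k - 1)%Z by lia.
  replace (- (- k - p) - 1)%Z with (k + p - 1)%Z by lia.
  destruct (Z.eq_dec (p + 2 * k) 0) as [E|E].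
  - replace (k + p - 1)%Z with (- k - 1)%Z by lia.
    replace (- k - p + 1)%Z with (k + 1)%Z by lia.
    replace (- k - p)%Z with k by lia.
    destruct (Z_le_dec 0 (p - 1 + 2 * k)); [lia|].
    destruct (Z_le_dec 0 (p - 1 + 2 * (k + 1))); [|lia]. ring.
  - destruct (Z_le_dec 0 (p + 2 * k)).
    + destruct (Z_le_dec 0 (p - 1 + 2 * k)); [|lia].
      destruct (Z_le_dec 0 (p - 1 + 2 * (k + 1))); [|lia]. ring.
    + destruct (Z_le_dec 0 (p - 1 + 2 * k)); [lia|].
      destruct (Z_le_dec 0 (p - 1 + 2 * (k + 1))); [|ring].
      replace (- k - p)%Z with (k + 1)%Z by lia. ring.
Qed.

Lemma H_cvg_ext h h' g : (forall j, h j = h' j) -> H_cvg h g -> H_cvg h' g.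
Proof. intros E H. replace h' with h; auto. apply functional_extensionality, E. Qed.

Lemma H_cvg_dom h1 g1 h2 g2 h g al be : 0 <= al -> 0 <= be ->
  (forall j n k, Cmod (op_sub (h j) g n k) ^ 2 <=
     al * Cmod (op_sub (h1 j) g1 n k) ^ 2 + be * Cmod (op_sub (h2 j) g2 n k) ^ 2) ->
  H_cvg h1 g1 -> H_cvg h2 g2 -> H_cvg h g.
Proof.
  intros Hal Hbe Hd C1 C2 eps He. set (e := eps / (al + be + 1)).
  assert (Hep : 0 < e) by (apply Rdiv_lt_0_compat; lra).
  destruct (C1 e Hep) as [N1 H1], (C2 e Hep) as [N2 H2]. exists (Nat.max N1 N2). intros j Hj.
  pose proof (sqnorm_le_dom _ _ _ _ _ _ _ Hal Hbe (Hd j) (H1 j ltac:(lia)) (H2 j ltac:(lia))) as D.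
  intros l Hl. eapply Rle_trans; [exact (D l Hl)|].
  assert (eps = e * (al + be + 1)) by (unfold e; field; lra). nra.
Qed.

Lemma H_cvg_add h1 g1 h2 g2 : H_cvg h1 g1 -> H_cvg h2 g2 ->
  H_cvg (fun j => op_add (h1 j) (h2 j)) (op_add g1 g2).
Proof.
  intros C1 C2. apply (H_cvg_dom h1 g1 h2 g2 _ _ 2 2); auto; try lra.
  intros j n k. unfold op_sub, op_add.
  replace (h1 j n k + h2 j n k - (g1 n k + g2 n k))%C
    with ((h1 j n k - g1 n k) + (h2 j n k - g2 n k))%C by ring.
  apply Cmod2_add_le.
Qed.

Lemma H_cvg_scal c h g : H_cvg h g -> H_cvg (fun j => op_scal c (h j)) (op_scal c g).
Proof.
  intros H. apply (H_cvg_dom h g h g _ _ (Cmod c ^ 2) 0); auto using pow2_ge_0; try lra.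
  intros j n k. unfold op_sub, op_scal.
  replace (c * h j n k - c * g n k)%C with (c * (h j n k - g n k))%C by ring.
  rewrite Cmod2_mult. lra.
Qed.

Lemma H_cvg_sub h1 g1 h2 g2 : H_cvg h1 g1 -> H_cvg h2 g2 ->
  H_cvg (fun j => op_sub (h1 j) (h2 j)) (op_sub g1 g2).
Proof.
  intros C1 C2. rewrite op_sub_add_scal.
  eapply H_cvg_ext; [intros j; symmetry; apply op_sub_add_scal|].
  apply H_cvg_add, H_cvg_scal; auto.
Qed.

Lemma H_cvg_Theta h g : H_cvg h g -> H_cvg (fun j => Theta (h j)) (Theta g).
Proof.
  intros H eps He. destruct (H eps He) as [N HN]. exists N. intros j Hj.
  change (sqnorm_le (Theta (op_sub (h j) g)) eps). apply sqnorm_le_Theta, HN, Hj.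
Qed.

Lemma H_cvg_sign_op h g : H_cvg h g -> H_cvg (fun j => sign_op (h j)) (sign_op g).
Proof.
  intros H. apply (H_cvg_dom h g h g _ _ 1 0); auto; try lra.
  intros j n k. unfold op_sub, sign_op.
  destruct Z_le_dec.
  - pose proof (pow2_ge_0 (Cmod (h j n k - g n k)%C)). lra.
  - replace (- h j n k - - g n k)%C with (- (h j n k - g n k))%C by ring.
    rewrite Cmod_opp. pose proof (pow2_ge_0 (Cmod (h j n k - g n k)%C)). lra.
Qed.

Lemma H_cvg_sign0_op h g : H_cvg h g -> H_cvg (fun j => sign0_op (h j)) (sign0_op g).
Proof.
  intros H. apply H_cvg_dom with (h1 := fun j => sign_op (h j)) (g1 := sign_op g)
    (h2 := h) (g2 := g) (al := 1) (be := 0); try lra; auto using H_cvg_sign_op.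
  intros j n k. unfold op_sub, sign0_op.
  pose proof (pow2_ge_0 (Cmod (h j n k - g n k)%C)).
  destruct Z.eq_dec; [|lra].
  replace (RtoC 0 - RtoC 0)%C with (RtoC 0) by ring. rewrite Cmod_0.
  pose proof (pow2_ge_0 (Cmod (sign_op (h j) n k - sign_op g n k)%C)). simpl. lra.
Qed.

Lemma Dbar_inH beta g w : Dbar beta g w -> inH g /\ inH w.
Proof. intros [Hg [Hw _]]. auto. Qed.

Lemma Dbar_add_scal beta g1 w1 g2 w2 c : Dbar beta g1 w1 -> Dbar beta g2 w2 ->
  Dbar beta (op_add g1 (op_scal c g2)) (op_add w1 (op_scal c w2)).
Proof.
  intros [Hg1 [Hw1 [h1 [D1 [C1 E1]]]]] [Hg2 [Hw2 [h2 [D2 [C2 E2]]]]].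
  split; [auto using inH_add, inH_scal|]. split; [auto using inH_add, inH_scal|].
  exists (fun j => op_add (h1 j) (op_scal c (h2 j))). split; [auto using inDom0_add, inDom0_scal|].
  split; [auto using H_cvg_add, H_cvg_scal|].
  apply (H_cvg_ext (fun j => op_add (Dbeta beta (h1 j)) (op_scal c (Dbeta beta (h2 j))))).
  - intros j. rewrite Dbeta_add, Dbeta_scal. reflexivity.
  - apply H_cvg_add, H_cvg_scal; assumption.
Qed.

Lemma Dbar_Theta beta g w : Dbar beta g w ->
  Dbar beta (Theta g) (op_scal (RtoC (-1)) (Theta w)).
Proof.
  intros [Hg [Hw [h [D1 [C1 E1]]]]].
  split; [auto using inH_Theta|]. split; [auto using inH_scal, inH_Theta|].
  exists (fun j => Theta (h j)). split; [auto using inDom0_Theta|].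
  split; [auto using H_cvg_Theta|].
  apply (H_cvg_ext (fun j => op_scal (RtoC (-1)) (Theta (Dbeta beta (h j))))).
  - intros j. rewrite Dbeta_Theta. reflexivity.
  - apply H_cvg_scal, H_cvg_Theta, E1.
Qed.

Lemma Dbar_sign beta g w : Dbar beta g w ->
  Dbar beta (sign_op (op_sub g (Theta g))) (sign0_op (op_add w (Theta w))).
Proof.
  intros [Hg [Hw [h [D1 [C1 E1]]]]].
  split; [auto using inH_sign_op, inH_sub, inH_Theta|].
  split; [auto using inH_sign0_op, inH_add, inH_Theta|].
  exists (fun j => sign_op (op_sub (h j) (Theta (h j)))).
  split; [auto using inDom0_sign_op, inDom0_sub, inDom0_Theta|].
  split; [auto using H_cvg_sign_op, H_cvg_sub, H_cvg_Theta|].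
  apply (H_cvg_ext (fun j => sign0_op (op_add (Dbeta beta (h j)) (Theta (Dbeta beta (h j)))))).
  - intros j. rewrite Dbeta_sign. reflexivity.
  - apply H_cvg_sign0_op, H_cvg_add, H_cvg_Theta; exact E1.
Qed.

(** * Weak resolvents *)

Section WeakResolvent.
Variable beta : Z -> C.
Variable m2 : R.

(* [g = (Dbar^* Dbar + m2)^-1 phi] in weak form, with [w] the image of [g] under [Dbar]. *)
Definition weak_resolvent (phi g w : Op) : Prop :=
  Dbar beta g w /\ inH phi /\
  forall h v, Dbar beta h v -> (ip v w + RtoC m2 * ip h g)%C = ip h phi.

Lemma weak_resolvent_of_is_resolvent phi g : inH phi ->
  is_resolvent beta m2 phi g -> exists w, weak_resolvent phi g w.
Proof.
  intros Hphi [w [u [HD [[Hw [Hu Hadj]] Heq]]]]. exists w. split; [exact HD|split; [exact Hphi|]].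
  destruct (Dbar_inH _ _ _ HD) as [Hg _].
  assert (Eu : u = op_sub phi (op_scal (RtoC m2) g)).
  { apply Op_ext; intros n k. unfold op_sub, op_scal. rewrite <- (Heq n k). ring. }
  intros h v Hd. destruct (Dbar_inH _ _ _ Hd) as [Hh Hv].
  rewrite (Hadj h v Hd (ip v w) (ip h u) (ip_spec _ _ Hv Hw) (ip_spec _ _ Hh Hu)).
  rewrite Eu, ip_sub_r, ip_scal_r by auto using inH_scal. ring.
Qed.

Lemma is_resolvent_of_weak_resolvent phi g w :
  weak_resolvent phi g w -> is_resolvent beta m2 phi g.
Proof.
  intros [HD [Hphi W]]. destruct (Dbar_inH _ _ _ HD) as [Hg Hw].
  exists w, (op_sub phi (op_scal (RtoC m2) g)). split; [exact HD|split].
  - split; [exact Hw|split; [auto using inH_sub, inH_scal|]].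
    intros h v Hd s1 s2 H1 H2. destruct (Dbar_inH _ _ _ Hd) as [Hh Hv].
    rewrite <- (ip_unique _ _ _ H1), <- (ip_unique _ _ _ H2).
    rewrite ip_sub_r, ip_scal_r, <- (W h v Hd) by auto using inH_scal. ring.
  - intros n k. unfold op_sub, op_scal. ring.
Qed.

Lemma weak_resolvent_add_scal phi1 g1 w1 phi2 g2 w2 c :
  weak_resolvent phi1 g1 w1 -> weak_resolvent phi2 g2 w2 ->
  weak_resolvent (op_add phi1 (op_scal c phi2)) (op_add g1 (op_scal c g2))
                 (op_add w1 (op_scal c w2)).
Proof.
  intros [HD1 [Hp1 W1]] [HD2 [Hp2 W2]].
  destruct (Dbar_inH _ _ _ HD1) as [Hg1 Hw1], (Dbar_inH _ _ _ HD2) as [Hg2 Hw2].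
  split; [apply Dbar_add_scal; auto|split; [auto using inH_add, inH_scal|]].
  intros h v Hd. destruct (Dbar_inH _ _ _ Hd) as [Hh Hv].
  rewrite !ip_add_r, !ip_scal_r by auto using inH_scal.
  rewrite <- (W1 h v Hd), <- (W2 h v Hd). ring.
Qed.

Lemma weak_resolvent_add phi1 g1 w1 phi2 g2 w2 :
  weak_resolvent phi1 g1 w1 -> weak_resolvent phi2 g2 w2 ->
  weak_resolvent (op_add phi1 phi2) (op_add g1 g2) (op_add w1 w2).
Proof.
  intros R1 R2. rewrite <- (op_add_scal_1 phi1), <- (op_add_scal_1 g1), <- (op_add_scal_1 w1).
  apply weak_resolvent_add_scal; auto.
Qed.

Lemma weak_resolvent_sub phi1 g1 w1 phi2 g2 w2 :
  weak_resolvent phi1 g1 w1 -> weak_resolvent phi2 g2 w2 ->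
  weak_resolvent (op_sub phi1 phi2) (op_sub g1 g2) (op_sub w1 w2).
Proof. intros R1 R2. rewrite !op_sub_add_scal. apply weak_resolvent_add_scal; auto. Qed.

Lemma weak_resolvent_Theta phi g w : weak_resolvent phi g w ->
  weak_resolvent (Theta phi) (Theta g) (op_scal (RtoC (-1)) (Theta w)).
Proof.
  intros [HD [Hphi W]]. destruct (Dbar_inH _ _ _ HD) as [Hg Hw].
  split; [apply Dbar_Theta, HD|split; [auto using inH_Theta|]].
  intros h v Hd. destruct (Dbar_inH _ _ _ Hd) as [Hh Hv].
  pose proof (W _ _ (Dbar_Theta _ _ _ Hd)) as E.
  rewrite ip_scal_l, !ip_Theta_l in E by auto using inH_Theta.
  rewrite ip_scal_r, <- E by auto using inH_Theta. Cring.
Qed.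

Lemma weak_resolvent_energy phi g w : weak_resolvent phi g w ->
  ip g phi = RtoC (hnorm2 w + m2 * hnorm2 g).
Proof.
  intros [HD [_ W]]. destruct (Dbar_inH _ _ _ HD) as [Hg Hw].
  rewrite <- (W g w HD), !ip_self by auto. Cring.
Qed.

Lemma weak_resolvent_cross_le phi g w h v : 0 <= m2 ->
  weak_resolvent phi g w -> Dbar beta h v ->
  2 * Re (ip h phi) <= hnorm2 v + m2 * hnorm2 h + (hnorm2 w + m2 * hnorm2 g).
Proof.
  intros Hm [HD [_ W]] Hd.
  destruct (Dbar_inH _ _ _ HD) as [Hg Hw], (Dbar_inH _ _ _ Hd) as [Hh Hv].
  rewrite <- (W h v Hd).
  pose proof (ip_Re_le v w 1 Hv Hw Rlt_0_1) as Bw.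
  pose proof (ip_Re_le h g 1 Hh Hg Rlt_0_1) as Bg.
  rewrite Rinv_1 in Bw, Bg.
  assert (m2 * (2 * Re (ip h g)) <= m2 * (1 * hnorm2 h + 1 * hnorm2 g))
    by (apply Rmult_le_compat_l; auto).
  revert Bw Bg H. Cexpand. lra.
Qed.

End WeakResolvent.

(** * Existence of the resolvent *)

Lemma inf_approx {A} (P : A -> Prop) (F : A -> R) lb :
  (exists a, P a) -> (forall a, P a -> lb <= F a) ->
  exists M, (forall a, P a -> M <= F a) /\
            (forall eps, 0 < eps -> exists a, P a /\ F a < M + eps).
Proof.
  intros [a0 Ha0] Hlb. set (E := fun r => exists a, P a /\ r = - F a).
  destruct (completeness E) as [m [Hub Hlub]].
  - exists (- lb). intros r [a [Ha ->]]. specialize (Hlb a Ha). lra.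
  - exists (- F a0), a0. auto.
  - exists (- m). split.
    + intros a Ha. assert (- F a <= m) by (apply Hub; exists a; auto). lra.
    + intros eps He. apply NNPP. intros Hno.
      assert (m <= m - eps); [|lra]. apply Hlub. intros r [a [Ha ->]].
      apply Rnot_lt_le. intros Hlt. apply Hno. exists a. split; auto. lra.
Qed.

Lemma inv_INR_succ_eventually_lt e : 0 < e ->
  exists N, forall j, (N <= j)%nat -> / (INR j + 1) < e.
Proof.
  intros He. destruct (archimed_cor1 e He) as [N [HN HN0]]. exists N. intros j Hj.
  eapply Rle_lt_trans; [|exact HN]. apply Rinv_le_contravar; [apply lt_0_INR; lia|].
  apply le_INR in Hj. lra.
Qed.

Lemma Cquad_ge0_eq0 z K : 0 <= K ->
  (forall c, 0 <= 2 * Re (c * z) + Cmod c ^ 2 * K) -> z = RtoC 0.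
Proof.
  intros HK H. set (t := / (K + 1)).
  assert (Ht : 0 < t) by (apply Rinv_0_lt_compat; lra).
  assert (HtK : t * K < 1).
  { unfold t. apply (Rmult_lt_reg_l (K + 1)); [lra|].
    rewrite <- Rmult_assoc, Rinv_r by lra. lra. }
  specialize (H (RtoC (- t) * Cconj z)%C). rewrite Cmod2_alt in H.
  destruct z as [x y]. unfold Re, Im in H; simpl in H.
  assert (E : 0 <= t * (x * x + y * y) * (t * K - 2)) by (eapply Rle_trans; [exact H|right; ring]).
  assert (x * x + y * y <= 0).
  { apply Rnot_lt_le. intros Hp.
    assert (t * (x * x + y * y) * (t * K - 2) < 0)
      by (apply Rmult_pos_neg; [apply Rmult_lt_0_compat|]; lra).
    lra. }
  apply injective_projections; simpl; nra.
Qed.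

Section Minimization.
Variable beta : Z -> C.
Variable m2 : R.
Variable phi : Op.
Hypothesis Hm2 : 0 < m2.
Hypothesis Hphi : inH phi.

Definition energy (h v : Op) : R := hnorm2 v + m2 * hnorm2 h - 2 * Re (ip h phi).

Lemma energy_lower_bound h v : inH h -> inH v -> - (/ m2 * hnorm2 phi) <= energy h v.
Proof.
  intros Hh Hv. unfold energy.
  pose proof (ip_Re_le h phi m2 Hh Hphi Hm2). pose proof (hnorm2_ge0 v Hv). lra.
Qed.

Lemma energy_add_scal g w h v c : inH g -> inH w -> inH h -> inH v ->
  energy (op_add g (op_scal c h)) (op_add w (op_scal c v)) =
  energy g w + 2 * Re (c * (ip w v + RtoC m2 * ip g h - ip phi h)) +
  Cmod c ^ 2 * (hnorm2 v + m2 * hnorm2 h).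
Proof.
  intros. unfold energy.
  rewrite !hnorm2_add_scal, ip_add_l, ip_scal_l, (ip_conj phi h) by auto using inH_scal.
  Cexpand. ring.
Qed.

Lemma energy_parallelogram h1 v1 h2 v2 : inH h1 -> inH v1 -> inH h2 -> inH v2 ->
  hnorm2 (op_sub v1 v2) + m2 * hnorm2 (op_sub h1 h2) =
  2 * energy h1 v1 + 2 * energy h2 v2 -
  4 * energy (op_scal (RtoC (/ 2)) (op_add h1 h2)) (op_scal (RtoC (/ 2)) (op_add v1 v2)).
Proof.
  intros. unfold energy.
  rewrite !hnorm2_scal, !hnorm2_add, !hnorm2_sub, ip_scal_l, ip_add_l, Cmod2_alt
    by auto using inH_add.
  Cexpand. field.
Qed.

Lemma energy_cvg h v g w : (forall j, inH (h j)) -> (forall j, inH (v j)) -> inH g -> inH w ->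
  H_cvg h g -> H_cvg v w -> is_lim_seq (fun j => energy (h j) (v j)) (energy g w).
Proof.
  intros Hh Hv Hg Hw Ch Cv. unfold energy.
  apply is_lim_seq_minus'; [apply is_lim_seq_plus'|].
  - apply hnorm2_cvg; auto.
  - apply (is_lim_seq_scal_l _ m2 (hnorm2 g)), hnorm2_cvg; auto.
  - apply (is_lim_seq_scal_l _ 2 (Re (ip g phi))), Re_ip_cvg_l; auto.
Qed.

Lemma energy_ge_on_Dbar M g w :
  (forall h, inDom0 h -> M <= energy h (Dbeta beta h)) -> Dbar beta g w -> M <= energy g w.
Proof.
  intros HM [Hg [Hw [h [Dh [Ch Cv]]]]].
  assert (L := energy_cvg _ _ _ _ (fun j => inH_of_inDom0 _ (Dh j))
                 (fun j => inH_of_inDom0 _ (inDom0_Dbeta beta _ (Dh j))) Hg Hw Ch Cv).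
  exact (is_lim_seq_le (fun _ => M) _ M _ (fun j => HM _ (Dh j)) (is_lim_seq_const M) L).
Qed.

Lemma energy_min_Euler_Lagrange g w : Dbar beta g w ->
  (forall h v, Dbar beta h v -> energy g w <= energy h v) -> weak_resolvent beta m2 phi g w.
Proof.
  intros HD Hmin. destruct (Dbar_inH _ _ _ HD) as [Hg Hw].
  split; [exact HD|split; [exact Hphi|]]. intros h v Hd. destruct (Dbar_inH _ _ _ Hd) as [Hh Hv].
  assert (Z : (ip w v + RtoC m2 * ip g h - ip phi h)%C = RtoC 0).
  { apply Cquad_ge0_eq0 with (K := hnorm2 v + m2 * hnorm2 h).
    - pose proof (hnorm2_ge0 v Hv); pose proof (hnorm2_ge0 h Hh). nra.
    - intros c. pose proof (Hmin _ _ (Dbar_add_scal _ _ _ _ _ c HD Hd)) as E.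
      rewrite energy_add_scal in E by auto. lra. }
  rewrite (ip_conj v w), (ip_conj h g), (ip_conj h phi) in Z by auto.
  revert Z. generalize (ip v w) (ip h g) (ip h phi). intros a b d Z. Cexpand.
  injection Z as Z1 Z2. apply injective_projections; simpl; lra.
Qed.

Lemma minimizing_sequence : exists M (hs : nat -> Op),
  (forall h, inDom0 h -> M <= energy h (Dbeta beta h)) /\ (forall j, inDom0 (hs j)) /\
  (forall j, energy (hs j) (Dbeta beta (hs j)) < M + / (INR j + 1)).
Proof.
  destruct (inf_approx inDom0 (fun h => energy h (Dbeta beta h)) (- (/ m2 * hnorm2 phi)))
    as [M [HM Happ]].
  - exists (fun _ _ => RtoC 0), nil. auto.
  - intros h Hh. apply energy_lower_bound; auto using inH_of_inDom0, inDom0_Dbeta.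
  - destruct (choice (fun j h => inDom0 h /\ energy h (Dbeta beta h) < M + / (INR j + 1)))
      as [hs Hs].
    + intros j. apply Happ, Rinv_0_lt_compat. pose proof (pos_INR j). lra.
    + exists M, hs. split; [exact HM|split; intros j; apply Hs].
Qed.

Lemma almost_minimizers_close M a b d : (forall h, inDom0 h -> M <= energy h (Dbeta beta h)) ->
  inDom0 a -> inDom0 b ->
  energy a (Dbeta beta a) <= M + d -> energy b (Dbeta beta b) <= M + d ->
  hnorm2 (op_sub (Dbeta beta a) (Dbeta beta b)) + m2 * hnorm2 (op_sub a b) <= 4 * d.
Proof.
  intros HM Ha Hb Ea Eb.
  pose proof (HM _ (inDom0_scal (RtoC (/ 2)) _ (inDom0_add _ _ Ha Hb))) as Emid.
  rewrite Dbeta_scal, Dbeta_add in Emid.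
  rewrite energy_parallelogram by auto using inH_of_inDom0, inDom0_Dbeta. lra.
Qed.

Lemma minimizing_sequence_Cauchy M hs :
  (forall h, inDom0 h -> M <= energy h (Dbeta beta h)) -> (forall j, inDom0 (hs j)) ->
  (forall j, energy (hs j) (Dbeta beta (hs j)) < M + / (INR j + 1)) ->
  H_Cauchy hs /\ H_Cauchy (fun j => Dbeta beta (hs j)).
Proof.
  intros HM Hdom Hlt.
  assert (Hh : forall j, inH (hs j)) by (intros; apply inH_of_inDom0, Hdom).
  assert (Hv : forall j, inH (Dbeta beta (hs j)))
    by (intros; apply inH_of_inDom0, inDom0_Dbeta, Hdom).
  assert (Close : forall e, 0 < e -> exists N, forall i j, (N <= i)%nat -> (N <= j)%nat ->
            hnorm2 (op_sub (hs i) (hs j)) <= e /\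
            hnorm2 (op_sub (Dbeta beta (hs i)) (Dbeta beta (hs j))) <= e).
  { intros e He. set (d := Rmin e (e * m2) / 4).
    destruct (inv_INR_succ_eventually_lt d) as [N HN].
    { apply Rdiv_lt_0_compat; [apply Rmin_pos; nra|lra]. }
    exists N. intros i j Hi Hj.
    pose proof (almost_minimizers_close M _ _ d HM (Hdom i) (Hdom j)
                  (Rlt_le _ _ (Rlt_trans _ _ _ (Hlt i) (Rplus_lt_compat_l M _ _ (HN i Hi))))
                  (Rlt_le _ _ (Rlt_trans _ _ _ (Hlt j) (Rplus_lt_compat_l M _ _ (HN j Hj))))).
    pose proof (hnorm2_ge0 _ (inH_sub _ _ (Hv i) (Hv j))).
    assert (0 <= m2 * hnorm2 (op_sub (hs i) (hs j)))
      by (apply Rmult_le_pos; [lra|apply hnorm2_ge0, inH_sub; auto]).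
    pose proof (Rmin_l e (e * m2)); pose proof (Rmin_r e (e * m2)). unfold d in *.
    split; [apply (Rmult_le_reg_l m2); [exact Hm2|]|]; lra. }
  split; intros e He; destruct (Close e He) as [N HN]; exists N; intros i j Hi Hj;
    (apply sqnorm_le_of_hnorm2_le; [apply inH_sub; auto|]).
  - exact (proj1 (HN i j Hi Hj)).
  - exact (proj2 (HN i j Hi Hj)).
Qed.

Lemma energy_limit_le M hs g w : (forall j, inDom0 (hs j)) -> inH g -> inH w ->
  (forall j, energy (hs j) (Dbeta beta (hs j)) < M + / (INR j + 1)) ->
  H_cvg hs g -> H_cvg (fun j => Dbeta beta (hs j)) w -> energy g w <= M.
Proof.
  intros Hdom Hg Hw Hlt Cg Cw. apply Rle_plus_epsilon. intros e He.
  destruct (inv_INR_succ_eventually_lt e He) as [N HN].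
  assert (L : Rbar_le (energy g w) (M + e)); [|exact L].
  eapply is_lim_seq_le_loc; [|apply energy_cvg; eauto|apply is_lim_seq_const].
  - exists N. intros j Hj. pose proof (Hlt j). pose proof (HN j Hj). lra.
  - intros j. apply inH_of_inDom0, Hdom.
  - intros j. apply inH_of_inDom0, inDom0_Dbeta, Hdom.
Qed.

Lemma weak_resolvent_exists : exists g w, weak_resolvent beta m2 phi g w.
Proof.
  destruct minimizing_sequence as [M [hs [HM [Hdom Hlt]]]].
  destruct (minimizing_sequence_Cauchy M hs HM Hdom Hlt) as [Ch CDh].
  destruct (H_complete hs) as [g [Hg Cg]]; [intros j; apply inH_of_inDom0, Hdom|exact Ch|].
  destruct (H_complete (fun j => Dbeta beta (hs j))) as [w [Hw Cw]];
    [intros j; apply inH_of_inDom0, inDom0_Dbeta, Hdom|exact CDh|].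
  assert (HD : Dbar beta g w) by (split; [|split; [|exists hs]]; auto).
  exists g, w. apply energy_min_Euler_Lagrange; [exact HD|].
  intros h v Hd. apply Rle_trans with M.
  - exact (energy_limit_le M hs g w Hdom Hg Hw Hlt Cg Cw).
  - apply energy_ge_on_Dbar; auto.
Qed.

End Minimization.

(** * Positivity *)

Lemma ip_sign_op_Hplus f g : (forall n k, (n + 2 * k < 0)%Z -> f n k = RtoC 0) ->
  inH f -> inH g ->
  ip (sign_op (op_sub g (Theta g))) (op_add f (Theta f)) =
  ip (op_sub g (Theta g)) (op_sub f (Theta f)).
Proof.
  intros Hsupp Hf Hg. apply ip_ext; auto using inH_sign_op, inH_sub, inH_add, inH_Theta.
  intros n k. unfold sign_op, op_sub, op_add, Theta.
  destruct (Z_le_dec 0 (n + 2 * k)).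
  - destruct (Z.eq_dec (n + 2 * k) 0).
    + replace (- k - n)%Z with k by lia. Cring.
    + rewrite (Hsupp n (- k - n)%Z) by lia. ring.
  - rewrite (Hsupp n k), Copp_conj by lia. ring.
Qed.

Lemma weak_resolvent_Theta_pairing beta m2 f g w : 0 <= m2 ->
  weak_resolvent beta m2 f g w -> (forall n k, (n + 2 * k < 0)%Z -> f n k = RtoC 0) ->
  Im (ip g (Theta f)) = 0 /\ 0 <= Re (ip g (Theta f)).
Proof.
  intros Hm R Hsupp. pose proof R as [HD [Hf _]]. destruct (Dbar_inH _ _ _ HD) as [Hg Hw].
  pose proof (weak_resolvent_Theta _ _ _ _ _ R) as RT.
  pose proof (weak_resolvent_sub _ _ _ _ _ _ _ _ R RT) as Ra. rewrite op_sub_scal_m1 in Ra.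
  pose proof (weak_resolvent_add _ _ _ _ _ _ _ _ R RT) as Rb. rewrite <- op_sub_add_scal in Rb.
  pose proof (weak_resolvent_energy _ _ _ _ _ Ra) as Ea.
  pose proof (weak_resolvent_energy _ _ _ _ _ Rb) as Eb.
  pose proof (weak_resolvent_cross_le _ _ _ _ _ _ _ Hm Rb (Dbar_sign _ _ _ HD)) as Cross.
  rewrite ip_sign_op_Hplus, Ea, hnorm2_sign_op in Cross by auto using inH_sub, inH_Theta.
  pose proof (hnorm2_sign0_op_le _ (inH_add _ _ Hw (inH_Theta _ Hw))).
  assert (Diff : (ip (op_add g (Theta g)) (op_add f (Theta f))
                  - ip (op_sub g (Theta g)) (op_sub f (Theta f)))%C = (4 * ip g (Theta f))%C).
  { rewrite !ip_add_l, !ip_add_r, !ip_sub_l, !ip_sub_r, (ip_Theta_l g f)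
      by auto using inH_Theta, inH_add, inH_sub.
    ring. }
  rewrite Ea, Eb in Diff. revert Diff Cross. generalize (ip g (Theta f)). intros z Diff Cross.
  Cexpand. injection Diff as D1 D2. simpl in Cross. lra.
Qed.

Theorem mainTheorem3 (beta : Z -> C) (m2 : R) :
  conv_increments beta -> 0 < m2 ->
  forall f : Op, inHplus f ->
    (exists g, is_resolvent beta m2 f g) /\
    (forall g, is_resolvent beta m2 f g ->
       forall s : C, inner_is (Theta f) g s -> Im s = 0 /\ 0 <= Re s).
Proof.
  intros _ Hm f [Hf Hsupp]. split.
  - destruct (weak_resolvent_exists beta m2 f Hm Hf) as [g [w R]].
    exists g. exact (is_resolvent_of_weak_resolvent _ _ _ _ _ R).
  - intros g Hres s Hs.
    destruct (weak_resolvent_of_is_resolvent _ _ _ _ Hf Hres) as [w R].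
    destruct (Dbar_inH _ _ _ (proj1 R)) as [Hg _].
    destruct (weak_resolvent_Theta_pairing _ _ _ _ _ (Rlt_le _ _ Hm) R Hsupp) as [Him Hre].
    rewrite <- (ip_unique _ _ _ Hs), (ip_conj g (Theta f)), im_conj, re_conj
      by auto using inH_Theta.
    split; lra.
Qed.
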